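(* For all $n \ge 0$, $$d_0(W_n1,\,1W_n) \;=\; \frac12 + \frac{1}{2\cdot 3^n} \;=\; d_0(1W_n,\,W_n1).$$
   Context: Words are finite strings over $\{0,1\}$; for a word $\alpha$, $\alpha(i)$ denotes its $i$-th letter and $|\alpha|$ its length. Define $W_0 = 0$ and $W_{m+1} = W_m W_m 1 W_m$ for $m\ge 0$. For words $\alpha,\beta$ with $|\alpha|=|\beta|$ and $\alpha$ containing at least one $0$, the modified $0$-Hamming distance is $$d_0(\alpha,\beta) = \frac{|\{i : \alpha(i)=0 \text{ and } \beta(i)=1\}|}{|\{i : \alpha(i)=0\}|}.$$ Here $W_n1$ and $1W_n$ denote concatenations with the one-letter word $1$. *)

(* Words over {0,1} are encoded as seq bool: false = 0, true = 1. *)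
From mathcomp Require Import all_boot all_order all_algebra.
Set Implicit Arguments. Unset Strict Implicit. Unset Printing Implicit Defensive.
Import GRing.Theory Num.Theory.
Local Open Scope ring_scope.

Fixpoint W (m : nat) : seq bool :=
  match m with
  | 0 => [:: false]
  | m'.+1 => W m' ++ W m' ++ [:: true] ++ W m'
  end.

(* modified 0-Hamming distance (meaningful when size a = size b and a has a 0):
   #{i | a(i)=0 /\ b(i)=1} / #{i | a(i)=0} *)
Definition d0 (a b : seq bool) : rat :=
  (count (fun i => ~~ nth false a i && nth false b i) (iota 0 (size a)))%:R
  / (count (fun i => ~~ nth false a i) (iota 0 (size a)))%:R.

From mathcomp Require Import all_boot all_order all_algebra.
From mathcomp Require Import ring zify.
Import GRing.Theory Num.Theory.
Local Open Scope ring_scope.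

(* Both numerators count the factors 10 (resp. 01) of W_n, plus one boundary
   position.  W_n begins and ends with 0 and its 1s are isolated, so the
   recursion W_(n+1) = W_n W_n 1 W_n gives c_(n+1) = 3 c_n + 1 for either
   count, i.e. 2 c_n + 1 = 3^n, which is also the number of 0s in W_n.  Hence
   both distances equal (c_n + 1) / (2 c_n + 1). *)

Lemma d0_zip (a b : seq bool) : size a = size b ->
  d0 a b = (count (fun p => ~~ p.1 && p.2) (zip a b))%:R / (count negb a)%:R.
Proof.
move=> eq_size; rewrite /d0 -[in count negb a](mkseq_nth false a) count_map.
rewrite -[zip a b](mkseq_nth (false, false)) count_map size_zip -eq_size minnn.
by congr (_%:R / _); apply: eq_in_count => i _; rewrite /preim /= nth_zip.
Qed.

Section AdjacentPairs.

Context {T : Type} (r : T -> T -> bool).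

Definition adj_count (x : T) (s : seq T) : nat := count id (pairmap r x s).

Lemma adj_count_cons x y s : adj_count x (y :: s) = (r x y + adj_count y s)%N.
Proof. by []. Qed.

Lemma adj_count_cat x s1 s2 :
  adj_count x (s1 ++ s2) = (adj_count x s1 + adj_count (last x s1) s2)%N.
Proof. by rewrite /adj_count pairmap_cat count_cat. Qed.

Lemma count_zip_cons_rcons x y s :
  count (fun p => r p.1 p.2) (zip (x :: s) (rcons s y))
  = (adj_count x s + r (last x s) y)%N.
Proof. by elim: s x => [|z s IHs] x /=; rewrite ?addn0 // IHs addnA. Qed.

Lemma count_zip_rcons_cons x y s :
  count (fun p => r p.2 p.1) (zip (rcons s y) (x :: s))
  = (adj_count x s + r (last x s) y)%N.
Proof. by elim: s x => [|z s IHs] x /=; rewrite ?addn0 // IHs addnA. Qed.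

End AdjacentPairs.

Lemma W_head n : W n = false :: behead (W n).
Proof. by elim: n => [|n IHn] //=; rewrite IHn. Qed.

Lemma last_W x n : last x (W n) = false.
Proof. by elim: n x => [|n IHn] x //=; rewrite !last_cat /= IHn. Qed.

Lemma count_zeros_W n : count negb (W n) = (3 ^ n)%N.
Proof. by elim: n => [|n IHn] //=; rewrite !count_cat /= IHn expnS; lia. Qed.

Lemma adj_count_W_head (r : bool -> bool -> bool) x n : r false false = false ->
  adj_count r x (W n) = (r x false + adj_count r false (W n))%N.
Proof. by move=> r00; rewrite W_head /adj_count /= r00. Qed.

(* [r] detects exactly one of the factors 01 and 10; the factor 11 never occurs. *)
Lemma adj_count_W (r : bool -> bool -> bool) n :
  (r false true + r true false = 1)%N -> r false false = false ->
  (2 * adj_count r false (W n)).+1 = (3 ^ n)%N.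
Proof.
move=> r01_10 r00; elim: n => [|n IHn] /=; first by rewrite /adj_count /= r00.
rewrite !adj_count_cat !last_W adj_count_cons (adj_count_W_head _ true) //.
by rewrite expnS -IHn; lia.
Qed.

Lemma succ_div_odd (F : numFieldType) (c : nat) :
  (c.+1)%:R / ((2 * c).+1)%:R = 1 / 2 + 1 / (2 * ((2 * c).+1)%:R) :> F.
Proof.
have odd_neq0 : ((2 * c).+1)%:R != 0 :> F by rewrite pnatr_eq0.
rewrite -addn1 natrD natrM in odd_neq0 *.
by field.
Qed.

Theorem lemma1 (n : nat) :
  d0 (W n ++ [:: true]) (true :: W n) = 1 / 2 + 1 / (2 * 3 ^+ n) :> rat /\
  d0 (true :: W n) (W n ++ [:: true]) = 1 / 2 + 1 / (2 * 3 ^+ n) :> rat.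
Proof.
pose r10 x y := ~~ y && x; pose r01 x y := ~~ x && y.
have count10 := @adj_count_W r10 n erefl erefl.
have count01 := @adj_count_W r01 n erefl erefl.
have size_W1 : size (W n ++ [:: true]) = size (true :: W n).
  by rewrite size_cat addn1.
rewrite -natrX !d0_zip // cats1 (count_zip_rcons_cons r10) (count_zip_cons_rcons r01).
rewrite -cats1 count_cat count_zeros_W /= !last_W !(adj_count_W_head _ true) //.
rewrite /r10 /r01 /= -/r10 -/r01 count_zeros_W !addn0 !add0n add1n addn1.
by split; [rewrite -count10 | rewrite -count01]; apply: succ_div_odd.
Qed.
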